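(* Let $s\ge2$ be an integer and $\psi_s(z):=z^{s-1}(z+s)-(s-1)^{s-1}$. Every complex root $\alpha$ of $\psi_s$ other than its unique negative real root satisfies $|\alpha|<s-1$.
   Context: The negative real root of $\psi_s$ is unique: it is $1-s$ when $s$ is odd and lies in $(-s-1,1-s)$ when $s$ is even. *)

From HB Require Import structures.
From mathcomp Require Import all_boot all_order all_algebra.
From mathcomp Require Import complex.
Set Implicit Arguments. Unset Strict Implicit. Unset Printing Implicit Defensive.
Import Order.TTheory GRing.Theory Num.Theory.
Local Open Scope ring_scope.

Definition psi (C : nzRingType) (s : nat) (z : C) : C :=
  z ^+ (s.-1) * (z + s%:R) - (s.-1)%:R ^+ (s.-1).

From HB Require Import structures.
From mathcomp Require Import all_boot all_order all_algebra.
From mathcomp Require Import complex ring lra.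
Set Implicit Arguments. Unset Strict Implicit. Unset Printing Implicit Defensive.
Import Order.TTheory GRing.Theory Num.Theory.
Import Normc.
Local Open Scope ring_scope.
Local Open Scope complex_scope.
(* Unqualified [Re] and [Im] would parse as the numClosedField operations ['Re] and ['Im]. *)
Local Notation Re := complex.Re.
Local Notation Im := complex.Im.

(* Write m = s - 1 and r = |z|.  A root satisfies z^m (z + m + 1) = m^m, so if
   r >= m then |z + m + 1| <= 1 and hence Re z <= -m.  The imaginary part of the
   equation gives r^(2m) |Im z| = m^m |Im (z^m)|, and the bound
   |Im (z^m)| <= m r^(m-1) |Im z| (that is, |sin m t| <= m |sin t|) turns this
   into r <= m whenever Im z <> 0.  So r = m and Re z <= -m force Im z = 0, and
   then z is the negative real root. *)

Section ComplexParts.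
Variable R : rcfType.
Implicit Types (z w v : R[i]) (c : R).

Lemma ImM w v : Im (w * v) = Re w * Im v + Im w * Re v.
Proof. by case: w v => [a b] [c d]. Qed.

Lemma Re_natr n : Re (n%:R : R[i]) = n%:R.
Proof. by rewrite -(rmorph_nat (real_complex R)). Qed.

Lemma Im_natr n : Im (n%:R : R[i]) = 0.
Proof. by rewrite -(rmorph_nat (real_complex R)). Qed.

Lemma normc_ge0 z : 0 <= normc z.
Proof. by case: z => a b; apply: sqrtr_ge0. Qed.

Lemma sqr_normcE z : normc z ^+ 2 = Re z ^+ 2 + Im z ^+ 2.
Proof. by case: z => a b /=; rewrite sqr_sqrtr // addr_ge0 ?sqr_ge0. Qed.

Lemma normc_real c : normc c%:C = `|c|.
Proof. by rewrite /= expr0n addr0 sqrtr_sqr. Qed.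

Lemma normcX z n : normc (z ^+ n) = normc z ^+ n.
Proof. by elim: n => [|n IHn]; rewrite ?normc1 // !exprS normcM IHn. Qed.

Lemma norm_complexE z : `|z| = (normc z)%:C.
Proof. by case: z. Qed.

Lemma norm_Re_le_normc z : `|Re z| <= normc z.
Proof. by rewrite -lecR -norm_complexE normc_ge_Re. Qed.

Lemma norm_Im_exprS_le z n :
  `|Im (z ^+ n.+1)| <= n.+1%:R * normc z ^+ n * `|Im z|.
Proof.
elim: n => [|n IHn]; first by rewrite expr1 expr0 !mul1r.
rewrite exprSr ImM; apply: le_trans (ler_normD _ _) _; rewrite !normrM.
have hRe : `|Re (z ^+ n.+1)| * `|Im z| <= normc z ^+ n.+1 * `|Im z|.
  by rewrite ler_wpM2r // -normcX norm_Re_le_normc.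
have hIm : `|Im (z ^+ n.+1)| * `|Re z| <= n.+1%:R * normc z ^+ n * `|Im z| * normc z.
  by apply: ler_pM => //; apply: norm_Re_le_normc.
apply: le_trans (lerD hRe hIm) _; rewrite le_eqVlt -natr1 !exprS; apply/orP; left.
apply/eqP; ring.
Qed.

(* The imaginary part of [conj w * (w v) = |w|^2 v]. *)
Lemma Im_mul_real w v c : w * v = c%:C -> normc w ^+ 2 * Im v = - (c * Im w).
Proof.
case: w v => [a b] [d e] [<- hIm]; rewrite sqr_normcE /=.
transitivity (a * (a * e + b * d) - b * (a * d - b * e)); first ring.
by rewrite hIm; ring.
Qed.

End ComplexParts.

Section PsiRoot.
Variables (R : rcfType) (n : nat) (z : R[i]).
Local Notation m := n.+1.
Hypothesis psi_root : z ^+ m * (z + m.+1%:R) = (m%:R ^+ m)%:C.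

Lemma Re_psi_root_le : m%:R <= normc z -> Re z <= - m%:R.
Proof.
move=> big_z; set v := z + m.+1%:R.
have M_gt0 : 0 < m%:R ^+ m :> R by rewrite exprn_gt0.
have norm_eq : normc z ^+ m * normc v = m%:R ^+ m.
  by rewrite -normcX -normcM psi_root normc_real ger0_norm // ltW.
have norm_v : normc v <= 1.
  rewrite -(ler_pM2l M_gt0) mulr1 -[X in _ <= X]norm_eq ler_wpM2r ?normc_ge0 //.
  by rewrite lerXn2r // nnegrE ?normc_ge0.
have : Re v <= 1.
  exact: le_trans (real_ler_norm (num_real _)) (le_trans (norm_Re_le_normc v) norm_v).
by rewrite raddfD /= Re_natr -[n.+2]addn1 natrD; lra.
Qed.

Lemma normc_psi_root_le : Im z != 0 -> normc z <= m%:R.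
Proof.
move=> Im_z_neq0; set r := normc z.
have [//|r_gt] := lerP r m%:R.
have r_gt0 : 0 < r by apply: le_lt_trans r_gt; rewrite ler0n.
have Im_gt0 : 0 < `|Im z| by rewrite normr_gt0.
have := Im_mul_real psi_root; rewrite raddfD /= Im_natr addr0 normcX -/r.
move/(congr1 Num.norm); rewrite normrN !normrM.
rewrite !(ger0_norm (exprn_ge0 _ (ltW r_gt0))) [`|_%:R ^+ _|]ger0_norm ?exprn_ge0 ?ler0n //.
move=> norm_eq.
have : r ^+ m * r ^+ m <= m%:R ^+ m * (m%:R * r ^+ n).
  rewrite -(ler_pM2r Im_gt0) norm_eq -mulrA ler_wpM2l ?exprn_ge0 //.
  exact: norm_Im_exprS_le.
have -> : r ^+ m * r ^+ m = r ^+ n * r ^+ m.+1 by rewrite -!exprD !addSn !addnS.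
have -> : m%:R ^+ m * (m%:R * r ^+ n) = r ^+ n * m%:R ^+ m.+1.
  by rewrite [RHS]mulrC [in RHS]exprSr mulrA.
rewrite ler_pM2l ?exprn_gt0 // ler_pXn2r // ?nnegrE ?(ltW r_gt0) ?ler0n //.
by rewrite leNgt r_gt.
Qed.

Lemma normc_psi_root_lt : ~ (z < 0) -> normc z < m%:R.
Proof.
move=> not_neg; rewrite ltNge; apply/negP => big_z.
have Re_z := Re_psi_root_le big_z.
have [Im_z0|Im_z_neq0] := eqVneq (Im z) 0.
  apply: not_neg; rewrite ltcE /= Im_z0 eqxx /=.
  by apply: le_lt_trans Re_z _; rewrite oppr_lt0 ltr0Sn.
have r_eq : normc z = m%:R by apply: le_anti; rewrite big_z normc_psi_root_le.
have m_le_Re : m%:R <= - Re z by rewrite lerNr.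
have Re_sq : m%:R ^+ 2 <= Re z ^+ 2.
  rewrite -[Re z ^+ 2]sqrrN; apply: lerXn2r => //; rewrite nnegrE ?ler0n //.
  exact: le_trans (ler0n _ _) m_le_Re.
have Im_sq : 0 < Im z ^+ 2 by rewrite exprn_even_gt0.
have := sqr_normcE z; rewrite r_eq; lra.
Qed.

End PsiRoot.

Theorem mainTheorem15 (R : rcfType) (s : nat) (hs : (2 <= s)%N)
  (a : R[i]) (ha : psi s a = 0) (hneg : ~ (a < 0)) :
  `|a| < (s.-1)%:R.
Proof.
case: s hs ha => [|[|n]] // _ /eqP; rewrite subr_eq0 /= => /eqP root_a.
have psi_root : a ^+ n.+1 * (a + n.+2%:R) = (n.+1%:R ^+ n.+1)%:C.
  by rewrite root_a -(rmorph_nat (real_complex R)) -rmorphXn.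
by rewrite norm_complexE -(rmorph_nat (real_complex R)) ltcR normc_psi_root_lt.
Qed.
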